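(* Every expanding automaton semigroup is residually finite.
   Context: An expanding automaton is a quadruple $\mathcal{A}=(Q,\Sigma,t,o)$ with $Q$ a finite set of states, $\Sigma$ a finite alphabet, $t:Q\times\Sigma\to Q$ and $o:Q\times\Sigma\to\Sigma^+$. Each state $q$ induces $q:\Sigma^*\to\Sigma^*$ by $q(\emptyset)=\emptyset$ and $q(\sigma w)=o(q,\sigma)\,q'(w)$ with $q'=t(q,\sigma)$. An expanding automaton semigroup is (a semigroup isomorphic to) the semigroup of maps $\Sigma^*\to\Sigma^*$ generated under composition by the states of an expanding automaton. *)

From mathcomp Require Import all_boot.
From Stdlib Require Import FunctionalExtensionality.
Set Implicit Arguments. Unset Strict Implicit. Unset Printing Implicit Defensive.

Definition expanding (Q Sigma : finType) (o : Q -> Sigma -> seq Sigma) : Prop :=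
  forall q a, o q a <> [::].

Fixpoint state_map (Q Sigma : Type) (t : Q -> Sigma -> Q) (o : Q -> Sigma -> seq Sigma)
  (q : Q) (w : seq Sigma) : seq Sigma :=
  match w with
  | [::] => [::]
  | a :: w' => o q a ++ state_map t o (t q a) w'
  end.

Definition word_map (Q Sigma : Type) (t : Q -> Sigma -> Q) (o : Q -> Sigma -> seq Sigma)
  (ws : seq Q) : seq Sigma -> seq Sigma :=
  foldr (fun q g => state_map t o q \o g) id ws.

Definition in_aut_semigroup (Q Sigma : Type) (t : Q -> Sigma -> Q)
  (o : Q -> Sigma -> seq Sigma) (f : seq Sigma -> seq Sigma) : Prop :=
  exists ws : seq Q, ws <> [::] /\ f = word_map t o ws.

Definition aut_semigroup (Q Sigma : Type) (t : Q -> Sigma -> Q)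
  (o : Q -> Sigma -> seq Sigma) : Type :=
  { f : seq Sigma -> seq Sigma | in_aut_semigroup t o f }.

Lemma word_map_cat (Q Sigma : Type) (t : Q -> Sigma -> Q) (o : Q -> Sigma -> seq Sigma)
  (ws1 ws2 : seq Q) : word_map t o (ws1 ++ ws2) = word_map t o ws1 \o word_map t o ws2.
Proof.
apply: functional_extensionality => w.
by elim: ws1 w => [|q ws IH] w //=; rewrite /word_map /= -/(word_map t o _) IH.
Qed.

Lemma in_aut_semigroup_comp (Q Sigma : Type) (t : Q -> Sigma -> Q)
  (o : Q -> Sigma -> seq Sigma) f g :
  in_aut_semigroup t o f -> in_aut_semigroup t o g -> in_aut_semigroup t o (f \o g).
Proof.
move=> [ws1 [n1 ->]] [ws2 [n2 ->]]; exists (ws1 ++ ws2); split.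
  by case: ws1 n1.
by rewrite word_map_cat.
Qed.

Definition aut_mul (Q Sigma : Type) (t : Q -> Sigma -> Q) (o : Q -> Sigma -> seq Sigma)
  (x y : aut_semigroup t o) : aut_semigroup t o :=
  exist _ (proj1_sig x \o proj1_sig y)
    (in_aut_semigroup_comp (proj2_sig x) (proj2_sig y)).

Definition residually_finite (S : Type) (mul : S -> S -> S) : Prop :=
  forall x y : S, x <> y ->
    exists (F : finType) (op : F -> F -> F) (phi : S -> F),
      associative op /\
      (forall a b, phi (mul a b) = op (phi a) (phi b)) /\
      phi x <> phi y.

(* A state map of an expanding automaton never shortens a word, and it
   processes its input letter by letter, so the first n letters of its output
   depend only on the first n letters of its input.  The same then holds for
   every element of the semigroup, so truncating everything to length n gives
   a homomorphism into the finite semigroup of self-maps of the set of words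
   of length at most n.  Two distinct elements differ on some word w, and for
   n beyond the lengths of w and of its two images, the truncation maps
   already differ. *)

From Stdlib Require Import Classical ProofIrrelevance FunctionalExtensionality.
From mathcomp Require Import all_boot.
Set Implicit Arguments. Unset Strict Implicit. Unset Printing Implicit Defensive.

Definition ffun_comp (T : finType) (F G : {ffun T -> T}) : {ffun T -> T} :=
  [ffun x => F (G x)].

Lemma ffun_compA (T : finType) : associative (@ffun_comp T).
Proof. by move=> F G H; apply/ffunP => x; rewrite !ffunE. Qed.

Lemma sig_fun_neq_point (A B : Type) (P : (A -> B) -> Prop) (x y : {f | P f}) :
  x <> y -> exists a, sval x a <> sval y a.
Proof.
case: x y => [f Pf] [g Pg] /= neq_xy; apply: NNPP => no_point; apply: neq_xy.
have eq_fg : f = g.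
  by apply: functional_extensionality => a; apply: NNPP => ?; apply: no_point; exists a.
by subst g; congr exist; exact: proof_irrelevance.
Qed.

Section Truncation.
Variable Sigma : finType.
Implicit Types (f g : seq Sigma -> seq Sigma) (n : nat) (v w : seq Sigma).

Definition causal f := forall n v, take n (f v) = take n (f (take n v)).

Lemma causal_id : causal id.
Proof. by move=> n v; rewrite take_takel. Qed.

Lemma causal_comp f g : causal f -> causal g -> causal (f \o g).
Proof. by move=> cf cg n v /=; rewrite [LHS]cf [RHS]cf cg. Qed.

Lemma causal_of_prefix f :
  (forall v w, exists r, f (v ++ w) = f v ++ r) ->
  (forall v, size v <= size (f v)) -> causal f.
Proof.
move=> prefix_f size_f n v.
have [le_n_v | lt_v_n] := leqP n (size v); last by rewrite (take_oversize (ltnW lt_v_n)).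
have [r def_fv] := prefix_f (take n v) (drop n v).
rewrite cat_take_drop in def_fv; rewrite def_fv takel_cat //.
by apply: leq_trans (size_f _); rewrite size_takel.
Qed.

Fixpoint words n : seq (seq Sigma) :=
  if n is n'.+1 then [::] :: [seq a :: w | a <- enum Sigma, w <- words n']
  else [:: [::]].

Lemma mem_words n w : size w <= n -> w \in words n.
Proof.
elim: n w => [|n IH] [|a w] //= le_w_n.
rewrite inE; apply/orP; right; apply/allpairsP; exists (a, w) => /=.
by rewrite mem_enum IH.
Qed.

Lemma size_take_leq n w : size (take n w) <= n.
Proof. by rewrite size_take_min geq_minl. Qed.

Definition truncate n w : seq_sub (words n) := SeqSub (mem_words (size_take_leq n w)).

Definition trunc_map n f : {ffun seq_sub (words n) -> seq_sub (words n)} :=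
  [ffun u => truncate n (f (ssval u))].

Lemma trunc_map_comp n f g : causal f ->
  trunc_map n (f \o g) = ffun_comp (trunc_map n f) (trunc_map n g).
Proof. by move=> cf; apply/ffunP => u; rewrite !ffunE; apply: val_inj; rewrite /= -cf. Qed.

Lemma trunc_map_separates n f g w :
  size w <= n -> size (f w) <= n -> size (g w) <= n -> f w <> g w ->
  trunc_map n f <> trunc_map n g.
Proof.
move=> le_w_n le_fw_n le_gw_n neq_fgw /ffunP/(_ (truncate n w)).
by rewrite !ffunE => /(congr1 val) /=; rewrite !take_oversize.
Qed.

End Truncation.

Section ExpandingAutomaton.
Variables (Q Sigma : finType) (t : Q -> Sigma -> Q) (o : Q -> Sigma -> seq Sigma).

Lemma state_map_cat q v w :
  state_map t o q (v ++ w) = state_map t o q v ++ state_map t o (foldl t q v) w.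
Proof. by elim: v q => [|a v IH] q //=; rewrite IH catA. Qed.

Hypothesis o_expanding : expanding o.

Lemma size_state_map q w : size w <= size (state_map t o q w).
Proof.
elim: w q => [|a w IH] q //=; rewrite size_cat -add1n leq_add ?IH //.
by have := @o_expanding q a; case: (o q a).
Qed.

Lemma causal_state_map q : causal (state_map t o q).
Proof.
apply: causal_of_prefix (size_state_map q) => v w.
by exists (state_map t o (foldl t q v) w); rewrite state_map_cat.
Qed.

Lemma causal_word_map ws : causal (word_map t o ws).
Proof. by elim: ws => [|q ws IH]; [exact: causal_id | exact: causal_comp (causal_state_map q) IH]. Qed.

End ExpandingAutomaton.

Theorem mainTheorem8 (Q Sigma : finType) (t : Q -> Sigma -> Q)
  (o : Q -> Sigma -> seq Sigma) :
  expanding o -> residually_finite (@aut_mul Q Sigma t o).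
Proof.
move=> o_exp x y /sig_fun_neq_point[w neq_xyw].
set n := maxn (size w) (maxn (size (sval x w)) (size (sval y w))).
exists {ffun seq_sub (words Sigma n) -> seq_sub (words Sigma n)},
  (@ffun_comp _), (fun z => trunc_map n (sval z)).
split; [exact: ffun_compA | split].
- move=> [a [ws [_ def_a]]] b /=; apply: trunc_map_comp.
  by rewrite def_a; exact: causal_word_map.
- by apply: trunc_map_separates neq_xyw; rewrite !leq_max leqnn ?orbT.
Qed.
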